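(* Let $q$ be an odd prime power, let $a,b\in\mathbb{F}_q$ with $b\ne0$, and let $n\ge2$ be an integer with $\gcd(n+1,q)=1$. Then $\hat C_n(a,b)$ is LCD if and only if $$a/b\notin\{-\mu/b+\theta^i+\theta^{-i} : 1\le i\le n\}\cup\{\mu/b+\theta^i+\theta^{-i} : 1\le i\le n\},$$ where $\mu\in\mathbb{F}_{q^2}$ satisfies $\mu^2=-1$ and $\theta\in\overline{\mathbb{F}}_q$ is a primitive $2(n+1)$-th root of unity.
   Context: For $a,b\in\mathbb{F}_q$ and $n\ge 2$, $\hat T_n(a,b)$ denotes the $n\times n$ symmetric tridiagonal Toeplitz matrix over $\mathbb{F}_q$ with all diagonal entries equal to $a$, all entries on the first super- and sub-diagonals equal to $b$, and all other entries $0$. $\hat C_n(a,b)$ is the $[2n,n]$ linear code over $\mathbb{F}_q$ with generator matrix $[I_n\mid \hat T_n(a,b)]$. A linear code $C$ is LCD if $C\cap C^\perp=\{0\}$ (Euclidean dual). *)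

From HB Require Import structures.
From mathcomp Require Import all_boot all_order all_algebra.
Set Implicit Arguments. Unset Strict Implicit. Unset Printing Implicit Defensive.
Import GRing.Theory.
Local Open Scope ring_scope.

Definition tridiagT (F : fieldType) (n : nat) (a b : F) : 'M[F]_n :=
  \matrix_(i < n, j < n)
    if i == j then a
    else if (i.+1 == j :> nat) || (j.+1 == i :> nat) then b else 0.

Definition genC (F : fieldType) (n : nat) (a b : F) : 'M[F]_(n, n + n) :=
  row_mx 1%:M (tridiagT n a b).

Definition lin_code (F : fieldType) (k m : nat) (G : 'M[F]_(k, m)) : pred 'rV[F]_m :=
  fun x => (x <= G)%MS.

Definition dual_code (F : fieldType) (m : nat) (C : pred 'rV[F]_m) (y : 'rV[F]_m) : Prop :=
  forall x, C x -> x *m y^T = 0.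

Definition is_LCD (F : fieldType) (m : nat) (C : pred 'rV[F]_m) : Prop :=
  forall x, C x -> dual_code C x -> x = 0.

From HB Require Import structures.
From mathcomp Require Import all_boot all_order all_algebra.
From mathcomp Require Import ring zify.
Set Implicit Arguments. Unset Strict Implicit. Unset Printing Implicit Defensive.
Import GRing.Theory.
Local Open Scope ring_scope.

(* 1. For any G = [I | T], the code spanned by G meets its dual trivially iff
      the Gram matrix G G^T = I + T T^T is invertible; here T is symmetric,
      so the criterion reads det (I + T^2) != 0.
   2. Over a field L with mu^2 = -1 we have I + T^2 = (T - mu)(T + mu), and
      T_n(a,b) - c = T_n(a - c, b) is again tridiagonal Toeplitz.
   3. With b != 0, a kernel vector of T_n(d,b) obeys the recurrence
      U_0 = 0, U_1 = 1, U_(k+2) = y U_(k+1) - U_k for y = -d/b, so T_n(d,b)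
      is singular iff U_(n+1)(-d/b) = 0.
   4. Writing y = t + 1/t gives (t - 1/t) U_k(y) = t^k - t^-k, so for theta a
      primitive 2(n+1)-th root of unity the n distinct values
      theta^i + theta^-i (1 <= i <= n) are roots of the degree-n polynomial
      U_(n+1), hence all of them; this root set is stable under negation.
   The main theorem combines 1-4 for c = mu and c = -mu. *)

(* The sequence U_k(y): U_0 = 0, U_1 = 1, U_(k+2) = y U_(k+1) - U_k, i.e.
   the Chebyshev polynomials of the second kind in y/2, shifted by one. *)
Fixpoint cheb (R : pzRingType) (y : R) (k : nat) : R :=
  match k with
  | 0 => 0
  | k'.+1 => if k' is k''.+1 then y * cheb y k' - cheb y k'' else 1
  end.
Arguments cheb {R} : simpl never.

Lemma cheb0 (R : pzRingType) (y : R) : cheb y 0 = 0. Proof. by []. Qed.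
Lemma cheb1 (R : pzRingType) (y : R) : cheb y 1 = 1. Proof. by []. Qed.
Lemma chebSS (R : pzRingType) (y : R) k :
  cheb y k.+2 = y * cheb y k.+1 - cheb y k.
Proof. by []. Qed.

Lemma nat_ind2 (P : nat -> Prop) :
  P 0%N -> P 1%N -> (forall k, P k -> P k.+1 -> P k.+2) -> forall k, P k.
Proof.
move=> h0 h1 hS k; suff: P k /\ P k.+1 by case.
by elim: k => [|k [? ?]]; split=> //; apply: hS.
Qed.

Lemma cheb_horner (L : fieldType) (y : L) k : (cheb 'X k).[y] = cheb y k.
Proof.
elim/nat_ind2: k => [|| k IH1 IH2]; first by rewrite !cheb0 hornerE.
  by rewrite !cheb1 hornerE.
by rewrite !chebSS !hornerE IH1 IH2.
Qed.

Lemma size_cheb (L : fieldType) k : size (cheb ('X : {poly L}) k) = k.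
Proof.
elim/nat_ind2: k => [|| k IH1 IH2]; rewrite ?cheb0 ?cheb1 ?size_poly0 ?size_poly1 //.
have nz : cheb ('X : {poly L}) k.+1 != 0 by rewrite -size_poly_eq0 IH2.
have sX : size ('X * cheb ('X : {poly L}) k.+1) = k.+2 by rewrite mulrC size_mulX // IH2.
by rewrite chebSS size_polyDl sX // size_polyN IH1.
Qed.

Lemma cheb_closed (L : fieldType) (t : L) k : t != 0 ->
  (t - t^-1) * cheb (t + t^-1) k = t ^+ k - t ^- k.
Proof.
move=> t0; elim/nat_ind2: k => [|| k IH1 IH2].
- by rewrite cheb0 mulr0 expr0 invr1 subrr.
- by rewrite cheb1 mulr1 expr1.
rewrite chebSS mulrBr mulrCA IH2 IH1 !exprS !invfM.
have tk0 : t ^+ k != 0 by rewrite expf_neq0.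
by field; rewrite ?t0 ?tk0.
Qed.

Section PrimitiveRoots.
Variables (L : fieldType) (m : nat) (z : L).
Hypothesis prim : m.-primitive_root z.

Lemma prim_root_neq0 : (0 < m)%N -> z != 0.
Proof.
move=> m0; apply/eqP=> z0; have := prim_expr_order prim.
by rewrite z0 expr0n eqn0Ngt m0 => /eqP; rewrite eq_sym oner_eq0.
Qed.

Lemma prim_expr_neq1 k : (0 < k)%N -> (k < m)%N -> z ^+ k != 1.
Proof.
move=> k0 km; rewrite -(prim_order_dvd prim); apply/negP=> /(dvdn_leq k0).
by rewrite leqNgt km.
Qed.

End PrimitiveRoots.

(* tcos theta i = theta^i + theta^-i plays the role of 2 cos(i pi/(n+1)). *)
Definition tcos (L : fieldType) (theta : L) (i : nat) := theta ^+ i + theta ^- i.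

Section RootsOfCheb.
Variables (L : fieldType) (n : nat) (theta : L).
Hypothesis prim : (2 * n.+1)%N.-primitive_root theta.

Let theta_neq0 : theta != 0. Proof. exact: prim_root_neq0 prim _. Qed.

Lemma cheb_tcos (i : nat) : (1 <= i <= n)%N -> cheb (tcos theta i) n.+1 = 0.
Proof.
move=> /andP[i1 iN]; set t := theta ^+ i.
have t0 : t != 0 by rewrite expf_neq0.
have t_neq_inv : t - t^-1 != 0.
  rewrite subr_eq0; apply: contraNneq (prim_expr_neq1 prim (k := 2 * i) _ _); last by lia.
    by move=> e; rewrite mulnC exprM -/t expr2 {2}e mulfV.
  by rewrite muln_gt0.
have tn_sqr : (t ^+ n.+1) ^+ 2 = 1.
  rewrite /t -!exprM (_ : (i * (n.+1 * 2) = (2 * n.+1) * i)%N); last by lia.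
  by rewrite exprM (prim_expr_order prim) expr1n.
have tn_inv : (t ^+ n.+1)^-1 = t ^+ n.+1.
  by rewrite -[LHS]mul1r -tn_sqr expr2 mulrK // unitfE expf_neq0.
have := cheb_closed n.+1 t0; rewrite tn_inv subrr => /eqP.
by rewrite mulf_eq0 (negbTE t_neq_inv) => /eqP.
Qed.

Lemma tcos_inj i j : (1 <= i <= n)%N -> (1 <= j <= n)%N ->
  tcos theta i = tcos theta j -> i = j.
Proof.
move=> hi hj; rewrite /tcos; set t := theta ^+ i; set s := theta ^+ j => e.
have t0 : t != 0 by rewrite expf_neq0.
have s0 : s != 0 by rewrite expf_neq0.
have : (t - s) * (1 - (t * s)^-1) = 0.
  rewrite invfM -[RHS](subrr (t + t^-1)) {2}e.
  by field; rewrite s0 t0.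
move/eqP; rewrite mulf_eq0 !subr_eq0 => /orP[ts | /eqP ts].
  by move: ts; rewrite /t /s (eq_prim_root_expr prim) !modn_small; lia.
have : theta ^+ (i + j) == 1 by rewrite exprD -/t -/s -[t * s]invrK -ts invr1.
by rewrite (negbTE (prim_expr_neq1 prim _ _)) //; lia.
Qed.

(* The roots of U_(n+1) are exactly the tcos theta i, 1 <= i <= n:
   there are n of them and U_(n+1) has degree n. *)
Lemma cheb_root_iff (y : L) :
  cheb y n.+1 = 0 <-> exists2 i, (1 <= i <= n)%N & y = tcos theta i.
Proof.
split; last by case=> i hi ->; apply: cheb_tcos.
move=> hy; set rs := map (tcos theta) (iota 1 n).
have [/mapP[i] | y_new] := boolP (y \in rs).
  by rewrite mem_iota => hi ->; exists i.
pose p : {poly L} := cheb 'X n.+1.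
have p0 : p != 0 by rewrite -size_poly_eq0 size_cheb.
have roots : all (root p) (y :: rs).
  rewrite /= /root cheb_horner hy eqxx; apply/allP=> z /mapP[i].
  by rewrite mem_iota /root => hi ->; rewrite cheb_horner cheb_tcos.
have uniq_roots : uniq (y :: rs).
  rewrite /= y_new map_inj_in_uniq ?iota_uniq // => i j.
  by rewrite !mem_iota => hi hj; apply: tcos_inj; lia.
by have := max_poly_roots p0 roots uniq_roots; rewrite /= size_map size_iota size_cheb ltnn.
Qed.

(* tcos theta (n+1-i) = - tcos theta i, since theta^(n+1) = -1. *)
Lemma tcos_compl i : (1 <= i <= n)%N -> tcos theta (n.+1 - i) = - tcos theta i.
Proof.
move=> hi; have half : theta ^+ n.+1 = -1.
  have : (theta ^+ n.+1) ^+ 2 == 1 by rewrite -exprM mulnC (prim_expr_order prim).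
  rewrite sqrf_eq1 => /orP[|/eqP //].
  by rewrite (negbTE (prim_expr_neq1 prim _ _)) //; lia.
have ti0 : theta ^+ i != 0 by rewrite expf_neq0.
rewrite /tcos expfB; last by lia.
by rewrite half invfM invrK invrN invr1; field; rewrite ti0.
Qed.

Lemma cheb_root_opp (y : L) : cheb (- y) n.+1 = 0 <-> cheb y n.+1 = 0.
Proof.
suff imp (x : L) : cheb (- x) n.+1 = 0 -> cheb x n.+1 = 0.
  by split=> [|h]; [apply: imp | apply: imp; rewrite opprK].
move=> /(cheb_root_iff (- x))[i hi e]; apply/(cheb_root_iff x).
exists (n.+1 - i)%N; first by lia.
by rewrite tcos_compl // -e opprK.
Qed.

End RootsOfCheb.

(* pad v k is the k-th coordinate of the row vector v, numbered from 1, with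
   v extended by zeros on both sides; it lets the columns of v T_N(d,b) be
   written uniformly. *)
Definition pad (L : fieldType) N (v : 'rV[L]_N) (k : nat) : L :=
  if k is k'.+1 then \sum_(i < N | (i : nat) == k') v 0 i else 0.

Lemma pad_ord (L : fieldType) N (v : 'rV[L]_N) (i : 'I_N) : pad v i.+1 = v 0 i.
Proof. by rewrite /pad (big_pred1 i) // => j; rewrite /= eqEord. Qed.

Lemma pad_out (L : fieldType) N (v : 'rV[L]_N) k : (N < k)%N -> pad v k = 0.
Proof.
case: k => // k hk; rewrite /pad big_pred0 // => i; apply/negbTE.
by apply: contraTneq (ltn_ord i) => ->; rewrite -leqNgt.
Qed.

Lemma pad_sum (L : fieldType) N (v : 'rV[L]_N) k :
  \sum_(i < N | ((i : nat).+1 == k)) v 0 i = pad v k.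
Proof. by case: k => [|k]; [rewrite big_pred0 | apply: eq_bigl]. Qed.

Lemma mul_tridiag (L : fieldType) N (d b : L) (v : 'rV[L]_N) (j : 'I_N) :
  (v *m tridiagT N d b) 0 j = b * pad v j + d * pad v j.+1 + b * pad v j.+2.
Proof.
rewrite mxE -[pad v j]pad_sum /pad !mulr_sumr.
rewrite [X in _ = X + _ + _]big_mkcond [X in _ = _ + X + _]big_mkcond.
rewrite [X in _ = _ + _ + X]big_mkcond -!big_split /=.
apply: eq_bigr => i _; rewrite !mxE -val_eqE /=.
have [h|[h|h]] : (i < j)%N \/ (j < i)%N \/ (i:nat) = j by lia.
- have -> : ((i:nat) == j) = false by lia.
  have -> : ((i:nat) == j.+1) = false by lia.
  have -> : ((j:nat).+1 == i) = false by lia.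
  by rewrite orbF; case: (_ == _); rewrite !(mulr0, add0r, addr0) // mulrC.
- have -> : ((i:nat) == j) = false by lia.
  have -> : ((i:nat).+1 == j) = false by lia.
  by rewrite /= eq_sym; case: (_ == _); rewrite !(mulr0, add0r, addr0) // mulrC.
- have -> : ((i:nat) == j) = true by lia.
  have -> : ((i:nat).+1 == j) = false by lia.
  have -> : ((i:nat) == j.+1) = false by lia.
  by rewrite !(mulr0, add0r, addr0) // mulrC.
Qed.

Section TridiagKernel.
Variables (L : fieldType) (m : nat) (d b : L).
Hypothesis b0 : b != 0.
Let y := - d / b.

Lemma tridiag_kernel_cheb (v : 'rV[L]_m.+1) : v *m tridiagT m.+1 d b = 0 ->
  forall k, (k <= m.+2)%N -> pad v k = pad v 1 * cheb y k.
Proof.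
move=> hv; elim/nat_ind2 => [|| k IH1 IH2] hk.
- by rewrite cheb0 mulr0.
- by rewrite cheb1 mulr1.
have col : 0 = b * pad v k + d * pad v k.+1 + b * pad v k.+2.
  by rewrite -(mul_tridiag d b v (Ordinal (hk : (k < m.+1)%N))) hv mxE.
have step : pad v k.+2 = y * pad v k.+1 - pad v k.
  apply: (mulfI b0); rewrite /y mulrBr mulrA mulrCA mulfV // mulr1.
  by apply/eqP; rewrite -subr_eq0 [X in _ == X]col; apply/eqP; ring.
by rewrite step IH1 ?IH2 1?chebSS; [ring | lia | lia].
Qed.

Lemma cheb_row_kernel : cheb y m.+2 = 0 ->
  (\row_(i < m.+1) cheb y i.+1) *m tridiagT m.+1 d b = 0.
Proof.
move=> hU; set v := \row__ _.
have pad_v k : (k <= m.+2)%N -> pad v k = cheb y k.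
  case: k => [|k] hk; first by rewrite cheb0.
  have [km | mk] := ltnP k m.+1; first by rewrite (pad_ord _ (Ordinal km)) mxE.
  by rewrite pad_out // (_ : k = m.+1) //; lia.
apply/rowP=> j; have hj := ltn_ord j.
rewrite mul_tridiag !pad_v ?mxE ?chebSS /y; try lia.
by field; rewrite b0.
Qed.

Lemma tridiag_singular_cheb : \det (tridiagT m.+1 d b) == 0 <-> cheb y m.+2 = 0.
Proof.
split.
  case/det0P=> v v0 hv; have := tridiag_kernel_cheb hv (leqnn _).
  rewrite pad_out // => /esym/eqP; rewrite mulf_eq0 => /orP[/eqP v1 | /eqP //].
  case/eqP: v0; apply/rowP=> i; rewrite mxE -pad_ord.
  by rewrite tridiag_kernel_cheb // ?v1 ?mul0r //; apply: leqW (ltn_ord i).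
move=> hU; apply/det0P; exists (\row_(i < m.+1) cheb y i.+1); last exact: cheb_row_kernel.
by apply/negP=> /eqP/rowP/(_ ord0); rewrite !mxE cheb1 => /eqP; rewrite oner_eq0.
Qed.

End TridiagKernel.

Lemma tridiag_shift_singular (L : fieldType) n (theta d b c : L) :
  (0 < n)%N -> (2 * n.+1)%N.-primitive_root theta -> b != 0 ->
  \det (tridiagT n d b - c%:M) == 0 <->
  exists i, [/\ (1 <= i)%N, (i <= n)%N & d / b = c / b + theta ^+ i + theta ^- i].
Proof.
case: n => // m _ prim b0.
have -> : tridiagT m.+1 d b - c%:M = tridiagT m.+1 (d - c) b.
  by apply/matrixP=> i j; rewrite !mxE; case: (i == j); rewrite ?mulr1n ?mulr0n ?subr0.
rewrite tridiag_singular_cheb // mulNr (cheb_root_opp prim) (cheb_root_iff prim).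
have shift i : ((d - c) / b = tcos theta i) <-> (d / b = c / b + theta ^+ i + theta ^- i).
  rewrite /tcos mulrBl -addrA; split=> [<- | ->]; ring.
split=> [[i /andP[i1 iN] /shift e] | [i [i1 iN /shift e]]]; exists i => //.
by rewrite i1.
Qed.

Lemma lcd_row_mx_iff (K : fieldType) n m (T : 'M[K]_(n, m)) :
  is_LCD (lin_code (row_mx 1%:M T)) <-> \det (1%:M + T *m T^T) != 0.
Proof.
set G := row_mx 1%:M T; set M := 1%:M + T *m T^T.
have gram : G *m G^T = M by rewrite tr_row_mx mul_row_col trmx1 mul1mx.
have M_sym : M^T = M by rewrite -gram trmx_mul trmxK.
split=> [lcd | detM x /submxP[u ->] dual_x].
  apply/negP=> /det0P[u u0 uM]; apply/negP: u0; apply/negPn/eqP.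
  have /eqP : u *m G = 0.
    apply: lcd; first exact: submxMl.
    move=> _ /submxP[w ->]; rewrite trmx_mul !mulmxA -(mulmxA w) gram.
    by rewrite -mulmxA -M_sym -trmx_mul uM trmx0 mulmx0.
  by rewrite mul_mx_row mulmx1 row_mx_eq0 => /andP[/eqP].
have G_ux : G *m (u *m G)^T = 0.
  apply/row_matrixP => i; rewrite rowE mulmxA row0.
  by apply: dual_x; apply: submxMl.
have : M *m u^T = 0 by rewrite -gram -mulmxA -trmx_mul.
have M_unit : M \in unitmx by rewrite unitmxE unitfE.
move/(congr1 (mulmx (invmx M))); rewrite mulmxA mulVmx // mul1mx mulmx0.
by move/(congr1 trmx); rewrite trmxK trmx0 => ->; rewrite mul0mx.
Qed.

Lemma det_one_add_sqr (R : comNzRingType) n (A : 'M[R]_n) (mu : R) :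
  mu ^+ 2 = -1 -> \det (1%:M + A *m A) = \det (A - mu%:M) * \det (A - (- mu)%:M).
Proof.
move=> mu2; rewrite -det_mulmx; congr (\det _).
rewrite mulmxBl !mulmxBr -scalar_mxM mul_mx_scalar mul_scalar_mx mulrN -expr2 mu2.
by rewrite scaleNr !opprK opprB addrCA addrK.
Qed.

Lemma tridiag_sym (K : fieldType) n (a b : K) : (tridiagT n a b)^T = tridiagT n a b.
Proof. by apply/matrixP=> i j; rewrite !mxE eq_sym orbC. Qed.

Lemma map_tridiag (F L : fieldType) (f : {rmorphism F -> L}) n (a b : F) :
  map_mx f (tridiagT n a b) = tridiagT n (f a) (f b).
Proof. by apply/matrixP=> i j; rewrite !mxE; do 2 case: ifP => _ //; rewrite rmorph0. Qed.

Theorem theorem2p7 (F : finFieldType) (L : fieldType) (iota : {rmorphism F -> L})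
    (n : nat) (a b : F) (mu theta : L) :
  odd #|F| ->
  b != 0 ->
  (2 <= n)%N ->
  coprime n.+1 #|F| ->
  mu ^+ 2 = -1 ->
  (2 * n.+1)%N.-primitive_root theta ->
  is_LCD (lin_code (genC n a b)) <->
  ~ (exists i : nat, [/\ (1 <= i)%N, (i <= n)%N &
        (iota (a / b) = - mu / iota b + theta ^+ i + theta ^- i \/
         iota (a / b) = mu / iota b + theta ^+ i + theta ^- i)]).
Proof.
move=> _ b0 n2 _ mu2 prim.
have n0 : (0 < n)%N by apply: leq_trans n2.
have ib0 : iota b != 0 by rewrite fmorph_eq0.
have h_mu := tridiag_shift_singular (iota a) mu n0 prim ib0.
have h_nmu := tridiag_shift_singular (iota a) (- mu) n0 prim ib0.
rewrite /genC lcd_row_mx_iff tridiag_sym -(fmorph_eq0 iota) -det_map_mx.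
rewrite map_mxD map_mx1 map_mxM map_tridiag (det_one_add_sqr _ mu2) mulf_eq0 negb_or.
rewrite fmorph_div; split.
- move=> /andP[/negP reg_mu /negP reg_nmu] [i [i1 iN [e | e]]].
    by apply: reg_nmu; apply/h_nmu; exists i.
  by apply: reg_mu; apply/h_mu; exists i.
- move=> no_root; apply/andP; split; apply/negP.
  + by move=> /h_mu[i [i1 iN e]]; apply: no_root; exists i; split=> //; right.
  + by move=> /h_nmu[i [i1 iN e]]; apply: no_root; exists i; split=> //; left.
Qed.
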